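(* Let $a, b, n$ be positive integers with $b>1$, $n>1$ and $\gcd(r_b(n),a)=1$, and write $S = S_a(b,n)$. Then the set of maximal elements of $\operatorname{Ap}(S)$ with respect to the partial order $\preceq_S$ is exactly \[\Big\{ a_i + (b-1)\sum_{j=i}^n a_j \;\Big|\; i = 2,\ldots,n\Big\}.\]
   Context: For $\ell \ge 1$, $r_b(\ell) = \sum_{j=0}^{\ell-1} b^j$, and $r_b(0)=0$. For $i \ge 1$, $a_i := r_b(n) + a\, r_b(i-1)$; $S_a(b,n)$ is the numerical semigroup generated by $\{a_i\}$, with multiplicity $a_1$. $\operatorname{Ap}(S) = \{\omega\in S : \omega - a_1 \notin S\}$. For a numerical semigroup $S$, $\preceq_S$ is the partial order on $\mathbb{Z}$ given by $y \preceq_S x$ iff $x - y \in S$. *)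

From mathcomp Require Import all_boot.
Set Implicit Arguments. Unset Strict Implicit. Unset Printing Implicit Defensive.

Definition rb (b l : nat) : nat := \sum_(j < l) b ^ j.

(* a_i = r_b(n) + a * r_b(i-1), meaningful for i >= 1 *)
Definition gen (a b n i : nat) : nat := rb b n + a * rb b i.-1.

Inductive inS (a b n : nat) : nat -> Prop :=
| inS0 : inS a b n 0
| inS_add (i x : nat) : 0 < i -> inS a b n x -> inS a b n (gen a b n i + x).

(* Apery set w.r.t. the multiplicity a_1:  w in S and w - a_1 not in S
   (w - a_1 is taken in Z: if w < a_1 it is negative, hence not in S) *)
Definition Ap (a b n w : nat) : Prop :=
  inS a b n w /\ ~ (gen a b n 1 <= w /\ inS a b n (w - gen a b n 1)).

Definition leS (a b n y x : nat) : Prop :=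
  exists s, inS a b n s /\ x = y + s.

Definition maxAp (a b n w : nat) : Prop :=
  Ap a b n w /\ forall w', Ap a b n w' -> leS a b n w w' -> w' = w.

From mathcomp Require Import all_boot zify.
Set Implicit Arguments. Unset Strict Implicit. Unset Printing Implicit Defensive.

(* Every element of S lies in a_1 + S or is a combination sum_l c_l a_l (1 <= l <= n)
   whose coefficients are dominated by (0,...,0,b,b-1,...,b-1), with b in some position
   p >= 2: this follows from the exchange relation b a_i + a_k = a_(i+1) + b a_(k-1) and
   from a_j in a_1 + S for j > n.  The dominating combination is
   omega_p = a_p + (b-1) sum_(j >= p) a_j, and omega_p + a_k lies in a_1 + S for every k,
   so the maximal elements of Ap(S) are among the omega_p, and each omega_p is maximal
   once it lies in Ap(S).  It does: writing s in S as D a_1 + a M, the base-b digit sum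
   of (b-1) M + D is at most D, whereas for s = omega_p - a_1 the coprimality of
   a_1 = r_b(n) and a pins down (b-1) M + D to a number with digit sum exceeding D. *)

Fixpoint digitsum_rec (b fuel x : nat) : nat :=
  if fuel is fuel'.+1 then x %% b + digitsum_rec b fuel' (x %/ b) else 0.

(* Fuel [x] suffices, as [x %/ b < x] for [0 < x]. *)
Definition digitsum (b x : nat) : nat := digitsum_rec b x x.

Section DigitSum.
Variable b : nat.
Hypothesis b_gt1 : 1 < b.

Lemma digitsum_rec0 fuel : digitsum_rec b fuel 0 = 0.
Proof. by elim: fuel => //= fuel IH; rewrite mod0n div0n IH. Qed.

Lemma digitsum_rec_fuel f1 f2 x : x <= f1 -> x <= f2 ->
  digitsum_rec b f1 x = digitsum_rec b f2 x.
Proof.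
case: (posnP x) => [-> _ _|x_gt0]; first by rewrite !digitsum_rec0.
elim: f1 f2 x x_gt0 => [|f1 IH] [|f2] x x_gt0 //= le_x1 le_x2; try lia.
have lt_x := ltn_Pdiv b_gt1 x_gt0; congr (_ + _).
case: (posnP (x %/ b)) => [->|q_gt0]; first by rewrite !digitsum_rec0.
apply: IH => //; lia.
Qed.

Lemma digitsumE x : digitsum b x = x %% b + digitsum b (x %/ b).
Proof.
case: (posnP x) => [->|x_gt0]; first by rewrite mod0n div0n.
rewrite /digitsum; case: x x_gt0 => // x x_gt0 /=; congr (_ + _).
apply: digitsum_rec_fuel => //; have := ltn_Pdiv b_gt1 x_gt0; lia.
Qed.

Lemma digitsum_digit r q : r < b -> digitsum b (r + b * q) = r + digitsum b q.
Proof.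
move=> lt_rb; have b_gt0 : 0 < b by lia.
by rewrite digitsumE mulnC divnDMl // divn_small // [r + _]addnC modnMDl modn_small.
Qed.

Lemma digit_decomp x : exists r q, [/\ r < b, x = r + b * q & (0 < x -> q < x)].
Proof.
exists (x %% b), (x %/ b); split; last exact: ltn_Pdiv.
- by rewrite ltn_mod; lia.
- by rewrite {1}(divn_eq x b); lia.
Qed.

Lemma digitsum_add1 x : digitsum b (x + 1) <= digitsum b x + 1.
Proof.
elim/ltn_ind: x => x IH; have [r [q [lt_rb def_x lt_q]]] := digit_decomp x; subst x.
case: (ltnP (r + 1) b) => carry.
  by rewrite addnAC !digitsum_digit //; lia.
have -> : r + b * q + 1 = 0 + b * (q + 1) by rewrite mulnDr; lia.
rewrite !digitsum_digit //; last lia.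
have := IH q (lt_q ltac:(lia)); lia.
Qed.

Lemma digitsum_addn x m : digitsum b (x + m) <= digitsum b x + m.
Proof.
elim: m => [|m IH]; first by rewrite !addn0.
have := digitsum_add1 (x + m); rewrite -addnA addn1; lia.
Qed.

Lemma digitsum_add_pow x e : digitsum b (x + b ^ e) <= digitsum b x + 1.
Proof.
elim: e x => [|e IH] x; first by rewrite expn0 digitsum_add1.
have [r [q [lt_rb -> _]]] := digit_decomp x.
rewrite expnS -addnA -mulnDr !digitsum_digit //; have := IH q; lia.
Qed.

Lemma digitsum_mul_pow_add q r k : r < b ^ k ->
  digitsum b (q * b ^ k + r) = digitsum b q + digitsum b r.
Proof.
elim: k r => [|k IH] r.
  by rewrite expn0 muln1 ltnS leqn0 => /eqP->; rewrite -[digitsum b 0]/0 !addn0.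
have [r0 [r1 [lt_r0 -> _]]] := digit_decomp r => lt_r.
have lt_r1 : r1 < b ^ k by rewrite expnS in lt_r; nia.
have -> : q * b ^ k.+1 + (r0 + b * r1) = r0 + b * (q * b ^ k + r1) by rewrite expnS; nia.
rewrite !digitsum_digit // IH //; lia.
Qed.

Lemma digitsum_complement k y : y < b ^ k ->
  digitsum b (b ^ k - 1 - y) + digitsum b y = k * (b - 1).
Proof.
elim: k y => [|k IH] y; first by rewrite expn0 ltnS leqn0 => /eqP->.
have [y0 [y1 [lt_y0 -> _]]] := digit_decomp y => lt_y.
have lt_y1 : y1 < b ^ k by rewrite expnS in lt_y; nia.
have -> : b ^ k.+1 - 1 - (y0 + b * y1) = (b - 1 - y0) + b * (b ^ k - 1 - y1).
  have : 0 < b ^ k by rewrite expn_gt0; lia.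
  rewrite expnS; nia.
rewrite !digitsum_digit; [|lia|lia]; have := IH y1 lt_y1; lia.
Qed.

Lemma digitsum_complement_lower k t y : t + y < b ^ k ->
  k * (b - 1) <= digitsum b (t * b ^ k + (b ^ k - 1 - (t + y))) + y.
Proof.
move=> lt_ty; rewrite digitsum_mul_pow_add; last lia.
have := digitsum_complement lt_ty; have := digitsum_addn t y; lia.
Qed.

End DigitSum.

Lemma rbS b l : rb b l.+1 = 1 + b * rb b l.
Proof.
rewrite /rb big_ord_recl expn0 big_distrr; congr (_ + _).
by apply: eq_bigr => i _; rewrite expnS.
Qed.

Lemma rbSr b l : rb b l.+1 = rb b l + b ^ l.
Proof. by rewrite /rb big_ord_recr. Qed.

Lemma rb_geometric b l : 0 < b -> (b - 1) * rb b l + 1 = b ^ l.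
Proof.
move=> b_gt0; elim: l => [|l IH]; first by rewrite /rb big_ord0 muln0.
rewrite rbSr mulnDr expnS; nia.
Qed.

Lemma rbD b l m : rb b (l + m) = rb b l + b ^ l * rb b m.
Proof.
elim: m => [|m IH]; first by rewrite addn0 /rb big_ord0 muln0 addn0.
by rewrite addnS !rbSr IH expnD; nia.
Qed.

Lemma double_mul_lt_expS b m : 0 < b -> 2 * ((b - 1) * m) < b ^ m.+1.
Proof.
move=> b_gt0; elim: m => [|m IH]; first by rewrite muln0 expn1.
have le_b : b <= b ^ m.+1 by rewrite -{1}(expn1 b) leq_pexp2l.
rewrite expnS; move: IH le_b; move: (b ^ m.+1) => X.
case: b b_gt0 => [|[|c]] // _ IH le_b; nia.
Qed.

Lemma coprime_lincomb_eq N a x y M M' : coprime N a -> M < N ->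
  x * N + a * M = y * N + a * M' -> exists2 t, M' = M + t * N & x = y + a * t.
Proof.
move=> coNa lt_MN eq_xy; have N_gt0 : 0 < N by lia.
have dvd_N m : N %| a * m -> N %| m by rewrite Gauss_dvdr.
case: (ltnP M' M) => [lt_M'M | le_MM'].
  have /dvd_N/dvdn_leq : N %| a * (M - M').
    have -> : a * (M - M') = (y - x) * N by rewrite mulnBr mulnBl; lia.
    exact: dvdn_mull.
  lia.
have /dvd_N/dvdnP[t def_t] : N %| a * (M' - M).
  have -> : a * (M' - M) = (x - y) * N by rewrite mulnBr mulnBl; lia.
  exact: dvdn_mull.
exists t; first lia.
have le_yx : y <= x.
  rewrite -(leq_pmul2r N_gt0); have := leq_mul (leqnn a) le_MM'; lia.
suff : (x - y) * N = a * t * N by move/eqP; rewrite eqn_pmul2r //; lia.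
by rewrite -mulnA -def_t mulnBr mulnBl; lia.
Qed.

Lemma geometric_tail b p m : 0 < b -> p <= m ->
  b ^ p + (b - 1) * \sum_(p.+1 <= l < m.+1) b ^ l.-1 = b ^ m.
Proof.
move=> b_gt0; elim: m => [|m IH] le_pm.
  by rewrite big_geq ?muln0 ?addn0 //; have -> : p = 0 by lia.
case: (ltnP m p) => [lt_mp | le_pm'].
  by rewrite big_geq ?muln0 ?addn0 //; have -> : p = m.+1 by lia.
rewrite big_nat_recr /=; last lia.
have := IH le_pm'; rewrite expnS; nia.
Qed.

Section Semigroup.
Variables a b n : nat.
Hypotheses (a_gt0 : 0 < a) (b_gt1 : 1 < b) (n_gt1 : 1 < n).

Local Notation N := (rb b n).
Local Notation g := (gen a b n).
Local Notation S := (inS a b n).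

Definition in_a1S z := exists2 s, S s & z = N + s.

Lemma rb_gt0 : 0 < N.
Proof. by case: n n_gt1 => // n' _; rewrite rbS. Qed.

Lemma gen_gt0 i : 0 < g i.
Proof. by rewrite /gen ltn_addr ?rb_gt0. Qed.

Lemma gen1 : g 1 = N.
Proof. by rewrite /gen /rb big_ord0 muln0 addn0. Qed.

Lemma rb_geometric_n : b ^ n = (b - 1) * N + 1.
Proof. by rewrite rb_geometric //; lia. Qed.

Lemma inSD x y : S x -> S y -> S (x + y).
Proof. by elim=> // i z i_gt0 _ IH /IH; rewrite -addnA; constructor. Qed.

Lemma inS_gen i : 0 < i -> S (g i).
Proof. by move=> i_gt0; rewrite -[g i]addn0; apply: inS_add => //; apply: inS0. Qed.

Lemma inS_muln k x : S x -> S (k * x).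
Proof.
by move=> Sx; elim: k => [|k IH]; [rewrite mul0n; apply: inS0 | rewrite mulSn; apply: inSD].
Qed.

Lemma inS_sum (r : seq nat) (F : nat -> nat) :
  (forall l, l \in r -> S (F l)) -> S (\sum_(l <- r) F l).
Proof.
elim: r => [|x r IH] SF; first by rewrite big_nil; apply: inS0.
rewrite big_cons; apply: inSD; first by apply: SF; rewrite mem_head.
by apply: IH => l r_l; apply: SF; rewrite inE r_l orbT.
Qed.

Lemma in_a1SD x y : in_a1S x -> S y -> in_a1S (x + y).
Proof. by case=> s Ss -> Sy; exists (s + y); [apply: inSD | rewrite addnA]. Qed.

Lemma in_a1S_gen1D y : S y -> in_a1S (g 1 + y).
Proof. by exists y; rewrite ?gen1. Qed.

(* a_{n+m+1} = a * a_1 + a_{m+1} + (b-1) a r_b(m) a_1, since b^n = (b-1) a_1 + 1. *)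
Lemma in_a1S_gen_gt j : n < j -> in_a1S (g j).
Proof.
move=> lt_nj; have [m ->] : exists m, j = n + m.+1 by exists (j - n).-1; lia.
exists ((a - 1) * g 1 + g m.+1 + (b - 1) * a * rb b m * g 1).
  by apply: inSD; [apply: inSD|]; try apply: inS_muln; apply: inS_gen.
rewrite gen1 /gen addnS /= rbD rb_geometric_n; nia.
Qed.

Lemma gen_exchange i k : 0 < i -> 1 < k -> b * g i + g k = g i.+1 + b * g k.-1.
Proof.
move=> i_gt0 k_gt1; rewrite /gen /=.
have -> : i = i.-1.+1 by lia.
have -> : k.-1 = k.-2.+1 by lia.
rewrite !rbS /=; nia.
Qed.

Definition comb (c : nat -> nat) := \sum_(1 <= l < n.+1) c l * g l.

Lemma inS_comb c : S (comb c).
Proof.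
apply: inS_sum => l; rewrite mem_index_iota => l_range.
by apply: inS_muln; apply: inS_gen; lia.
Qed.

Lemma combD c d : comb (fun l => c l + d l) = comb c + comb d.
Proof. by rewrite /comb -big_split; apply: eq_bigr => l _; rewrite mulnDl. Qed.

Lemma eq_comb c d : (forall l, 0 < l <= n -> c l = d l) -> comb c = comb d.
Proof. by move=> eq_cd; apply: eq_big_nat => l l_range; rewrite eq_cd //; lia. Qed.

Lemma comb_delta k i : 0 < i <= n -> comb (fun l => k * (l == i)) = k * g i.
Proof.
move=> i_range; rewrite /comb (bigD1_seq i) /=; last exact: iota_uniq.
  2: by rewrite mem_index_iota.
rewrite eqxx muln1 big1_seq ?addn0 // => l /andP[l_neq_i _].
by rewrite (negbTE l_neq_i) muln0 mul0n.
Qed.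

Lemma comb_add_gen c j : 0 < j <= n -> g j + comb c = comb (fun l => c l + (l == j)).
Proof.
move=> j_range; rewrite combD addnC -[g j]mul1n -(comb_delta 1 j_range).
by congr (_ + _); apply: eq_comb => l _; rewrite mul1n.
Qed.

Definition maxcoef p l := if l == p then b else if p < l then b - 1 else 0.

Lemma sum_maxcoef p (f : nat -> nat) : 0 < p <= n ->
  \sum_(1 <= l < n.+1) maxcoef p l * f l
    = b * f p + (b - 1) * \sum_(p.+1 <= l < n.+1) f l.
Proof.
move=> p_range; rewrite (big_cat_nat _ (n := p)); [|lia|lia].
rewrite big1_seq ?add0n => [|l /andP[_]]; last first.
  by rewrite mem_index_iota /maxcoef => l_range; rewrite ifF ?ifF //; [lia|apply/eqP; lia].
have tail : \sum_(p.+1 <= l < n.+1) maxcoef p l * f l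
    = (b - 1) * \sum_(p.+1 <= l < n.+1) f l.
  rewrite big_distrr; apply: eq_big_nat => l l_range.
  by rewrite /maxcoef ifF ?ifT //; [lia|apply/eqP; lia].
by rewrite big_ltn ?tail /maxcoef ?eqxx //; lia.
Qed.

Definition omega i := g i + (b - 1) * \sum_(i <= j < n.+1) g j.

Lemma omegaE i : i <= n -> omega i = b * g i + (b - 1) * \sum_(i.+1 <= l < n.+1) g l.
Proof. by move=> le_in; rewrite /omega big_ltn // mulnDr addnA; congr (_ + _); nia. Qed.

Lemma comb_maxcoef p : 0 < p <= n -> comb (maxcoef p) = omega p.
Proof. by move=> p_range; rewrite /comb sum_maxcoef // omegaE //; case/andP: p_range. Qed.

Lemma omega_add_gen_in_a1S k i : 0 < k -> 0 < i <= n -> in_a1S (omega i + g k).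
Proof.
elim: k i => [|k IH] i // _ i_range.
case: (posnP k) => [-> | k_gt0].
  rewrite addnC; apply: in_a1S_gen1D; rewrite -comb_maxcoef //; exact: inS_comb.
rewrite omegaE; last lia.
rewrite addnAC gen_exchange /=; [|lia|lia].
case: (ltnP i n) => [lt_in | le_ni].
  rewrite big_ltn //; set tail := \sum_(i.+2 <= l < n.+1) g l.
  have -> : g i.+1 + b * g k + (b - 1) * (g i.+1 + tail)
      = (b * g i.+1 + (b - 1) * tail + g k) + (b - 1) * g k by nia.
  apply: in_a1SD; last by apply: inS_muln; apply: inS_gen.
  by rewrite -omegaE //; apply: IH.
rewrite big_geq ?muln0 ?addn0; last lia.
by apply: in_a1SD; [apply: in_a1S_gen_gt; lia | apply: inS_muln; apply: inS_gen].
Qed.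

Definition coef_sum (c : nat -> nat) := \sum_(1 <= l < n.+1) c l.
Definition coef_weight (c : nat -> nat) := \sum_(1 <= l < n.+1) c l * rb b l.-1.

Lemma comb_coefE c : comb c = coef_sum c * N + a * coef_weight c.
Proof.
rewrite /comb /coef_sum /coef_weight big_distrl big_distrr -big_split /=.
by apply: eq_bigr => l _; rewrite /gen; nia.
Qed.

Lemma coef_geometric c :
  (b - 1) * coef_weight c + coef_sum c = \sum_(1 <= l < n.+1) c l * b ^ l.-1.
Proof.
rewrite /coef_weight /coef_sum big_distrr -big_split /=; apply: eq_bigr => l _.
rewrite -(rb_geometric l.-1 (_ : 0 < b)); [nia | lia].
Qed.

Lemma coef_sum_maxcoef p : 0 < p <= n -> coef_sum (maxcoef p) = b + (b - 1) * (n - p).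
Proof.
move=> p_range; rewrite /coef_sum.
under eq_bigr do rewrite -[maxcoef p _]muln1.
by rewrite sum_maxcoef // sum_nat_const_nat; lia.
Qed.

Lemma coef_geometric_maxcoef p : 0 < p <= n ->
  (b - 1) * coef_weight (maxcoef p) + coef_sum (maxcoef p) = b ^ n.
Proof.
move=> p_range; rewrite coef_geometric sum_maxcoef //.
rewrite -(geometric_tail (_ : 0 < b) (_ : p <= n)); [|lia|lia].
have -> : p = p.-1.+1 by lia.
by rewrite /= expnS.
Qed.

Definition admissible (c : nat -> nat) := exists2 p, 1 < p <= n &
  [/\ forall l, 0 < l < p -> c l = 0, c p <= b & forall l, p < l <= n -> c l < b].

Definition exchangeable j (d : nat -> nat) := exists i k,
  [/\ j <= i <= n, 1 < k <= i, b + (k == i) <= d i & 0 < d k].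

Lemma admissible_step c j : admissible c -> 1 < j <= n ->
  admissible (fun l => c l + (l == j)) \/ exchangeable j (fun l => c l + (l == j)).
Proof.
move=> [p p_range [zero_lt_p cp_le top_lt]] j_range.
case: (ltngtP j p) => [lt_jp | lt_pj | eq_jp].
- case: (ltnP (c p) b) => [cp_lt | cp_ge].
    left; exists j => //; split=> [l l_range | | l l_range]; first by have := zero_lt_p l; lia.
      by have := zero_lt_p j; lia.
    by case: (ltngtP l p) => [lt_lp | lt_pl | ->]; [have := zero_lt_p l | have := top_lt l |]; lia.
  by right; exists p, j; split; lia.
- case: (ltnP (c j).+1 b) => [cj_lt | cj_ge].
    left; exists p => //; split=> [l l_range | | l l_range]; first by have := zero_lt_p l; lia.
      by lia.
    by case: (eqVneq l j) => [-> | _]; [| have := top_lt l]; lia.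
  have cj_eq : c j = b - 1 by have := top_lt j; lia.
  case: (boolP (has (fun l => 0 < c l) (index_iota 2 j))) => [/hasP[k] | /hasPn no_k].
    by rewrite mem_index_iota => k_range ck_gt0; right; exists j, k; split; lia.
  left; exists j => //; split=> [l l_range | | l l_range]; last by have := top_lt l; lia.
    case: (ltnP 1 l) => l_gt1; first by have := no_k l; rewrite mem_index_iota -leqNgt; lia.
    have -> : l = 1 by lia.
    by have := zero_lt_p 1; lia.
  by lia.
- subst p; case: (ltnP (c j) b) => [cj_lt | cj_ge]; last by right; exists j, j; split; lia.
  left; exists j => //; split=> [l l_range | | l l_range]; last by have := top_lt l; lia.
    by have := zero_lt_p l; lia.
  by lia.
Qed.

Lemma comb_exchange d i k : 1 < k <= i -> i <= n -> b + (k == i) <= d i -> 0 < d k ->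
  comb d = g i.+1 + (b * g k.-1 + comb (fun l => d l - b * (l == i) - (l == k))).
Proof.
move=> k_range le_in d_i d_k.
set r := fun l => _ - _ - _.
have -> : comb d = comb (fun l => r l + b * (l == i) + 1 * (l == k)).
  apply: eq_comb => l _; rewrite /r.
  by case: (eqVneq l i) => [eq_li|]; case: (eqVneq l k) => [eq_lk|]; subst; lia.
rewrite 2!combD !comb_delta; [|lia|lia].
have := gen_exchange (_ : 0 < i) (_ : 1 < k); lia.
Qed.

Definition normal z := in_a1S z \/ exists2 c, admissible c & z = comb c.

Lemma normal_add_gen j c : 0 < j -> admissible c ->
  (forall z, z < g j + comb c -> S z -> normal z) -> normal (g j + comb c).
Proof.
have [m] := ubnP (n.+1 - j); elim: m => // m IH in j c *.
rewrite ltnS => le_jm j_gt0 adm_c below.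
case: (eqVneq j 1) => [-> | j_neq1]; first by left; apply: in_a1S_gen1D; apply: inS_comb.
case: (leqP j n) => [le_jn | lt_nj].
  2: by left; apply: in_a1SD; [apply: in_a1S_gen_gt | apply: inS_comb].
have j_range : 1 < j <= n by lia.
rewrite comb_add_gen in below *; last lia.
case: (admissible_step adm_c j_range) => [adm_d | [i [k [i_range k_range d_i d_k]]]].
  by right; exists (fun l => c l + (l == j)).
rewrite (comb_exchange k_range _ d_i d_k) in below *; last lia.
set y := b * g k.-1 + _ in below *.
have Sy : S y by apply: inSD; [apply: inS_muln; apply: inS_gen; lia | apply: inS_comb].
have [a1S_y | [c' adm_c' def_y]] := below y ltac:(have := gen_gt0 i.+1; lia) Sy.
  by left; rewrite addnC; apply: in_a1SD => //; apply: inS_gen.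
by rewrite def_y in below *; apply: IH => //; lia.
Qed.

Lemma inS_normal z : S z -> normal z.
Proof.
elim/ltn_ind: z => z IH Sz; case: Sz IH => [|i x i_gt0 Sx] IH.
  right; exists (fun => 0); last by rewrite /comb big1.
  by exists 2 => //; split=> // l _; lia.
have [a1S_x | [c adm_c def_x]] := IH x ltac:(have := gen_gt0 i; lia) Sx.
  by left; rewrite addnC; apply: in_a1SD => //; apply: inS_gen.
by rewrite def_x in IH *; apply: normal_add_gen.
Qed.

Lemma admissible_le_omega c : admissible c ->
  exists2 p, 1 < p <= n & exists2 s, S s & omega p = comb c + s.
Proof.
move=> [p p_range [zero_lt_p cp_le top_lt]]; exists p => //.
exists (comb (fun l => maxcoef p l - c l)); first exact: inS_comb.
rewrite -comb_maxcoef -?combD; last lia.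
apply: eq_comb => l l_range; rewrite /maxcoef.
case: (ltngtP l p) => [lt_lp | lt_pl | ->]; rewrite ?eqxx;
  [have := zero_lt_p l | have := top_lt l |]; lia.
Qed.

(* Adding a_i = a_1 + a r_b(i-1) raises D by 1 and (b-1) M + D by b^(i-1). *)
Lemma inS_coef_repr s : S s -> exists D M,
  s = D * N + a * M /\ digitsum b ((b - 1) * M + D) <= D.
Proof.
elim=> [|i x i_gt0 _ [D [M [-> ds_le]]]]; first by exists 0, 0; rewrite !muln0.
exists D.+1, (M + rb b i.-1); split; first by rewrite /gen; nia.
have -> : (b - 1) * (M + rb b i.-1) + D.+1 = (b - 1) * M + D + b ^ i.-1.
  by rewrite -(rb_geometric i.-1 (_ : 0 < b)); [nia | lia].
by have := digitsum_add_pow b_gt1 ((b - 1) * M + D) i.-1; lia.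
Qed.

Lemma Ap_iff w : Ap a b n w <-> S w /\ ~ in_a1S w.
Proof.
rewrite /Ap gen1; split=> -[Sw not_a1S]; split=> //.
  by case=> s Ss def_w; apply: not_a1S; rewrite def_w addKn leq_addr.
by case=> le_Nw Sw'; apply: not_a1S; exists (w - N); rewrite ?subnKC.
Qed.

Hypothesis coprime_a1 : coprime N a.

(* Coprimality gives M' = M + t a_1, and then (b-1) M' + D = t b^n + (b^n - 1 - (a+1) t),
   whose digit sum is at least n (b-1) - a t > D. *)
Lemma omega_notin_a1S p : 1 < p <= n -> ~ in_a1S (omega p).
Proof.
move=> p_range [s /inS_coef_repr[D [M' [-> ds_le]]]].
have p_range' : 0 < p <= n by lia.
rewrite -comb_maxcoef // comb_coefE.
have := coef_sum_maxcoef p_range'; have := coef_geometric_maxcoef p_range'.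
set K := coef_sum _; set M := coef_weight _ => geo_KM def_K eq_KM; clearbody K M.
have geo_N := rb_geometric_n.
have le_bK : b <= K by rewrite def_K leq_addr.
have def_K' : K = ((b - 1) * (n - p).+1).+1 by rewrite def_K mulnS; lia.
have lt_MN : M < N by rewrite -(ltn_pmul2l (_ : 0 < b - 1)); lia.
have [t def_M' K_eq] : exists2 t, M' = M + t * N & K = D.+1 + a * t.
  by apply: coprime_lincomb_eq coprime_a1 lt_MN _; rewrite mulSn; lia.
have le_K : (b - 1) * (n - p).+1 <= (b - 1) * n.-1 by apply: leq_mul; lia.
have lt_K : (b - 1) * (n - p).+1 < (b - 1) * n by rewrite ltn_pmul2l; lia.
have lt_t : t + a * t < b ^ n.
  have := double_mul_lt_expS n.-1 (_ : 0 < b); rewrite prednK; last lia.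
  have : t <= a * t by apply: leq_pmull.
  lia.
have def_X : (b - 1) * M' + D = t * b ^ n + (b ^ n - 1 - (t + a * t)).
  have -> : (b - 1) * M' = (b - 1) * M + t * ((b - 1) * N) by rewrite def_M' mulnDr mulnCA.
  have : t * b ^ n = t * ((b - 1) * N) + t by rewrite geo_N mulnDr muln1.
  lia.
have := digitsum_complement_lower b_gt1 lt_t; rewrite -def_X mulnC; lia.
Qed.

Lemma Ap_omega p : 1 < p <= n -> Ap a b n (omega p).
Proof.
move=> p_range; apply/Ap_iff; split; last exact: omega_notin_a1S.
by rewrite -comb_maxcoef; [apply: inS_comb | lia].
Qed.

Lemma maxAp_omega p : 1 < p <= n -> maxAp a b n (omega p).
Proof.
move=> p_range; split=> [|w /Ap_iff[_ not_a1S] [s [Ss def_w]]]; first exact: Ap_omega.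
case: Ss def_w => [|i x i_gt0 Sx] def_w; first by rewrite def_w addn0.
exfalso; apply: not_a1S; rewrite def_w addnA; apply: in_a1SD => //.
by apply: omega_add_gen_in_a1S; lia.
Qed.

Lemma maxAp_omegaP w : maxAp a b n w -> exists2 p, 1 < p <= n & w = omega p.
Proof.
move=> [/Ap_iff[Sw not_a1S] w_max].
have [//|[c adm_c def_w]] := inS_normal Sw.
have [p p_range [s Ss omega_p]] := admissible_le_omega adm_c.
exists p => //; symmetry; apply: w_max; first exact: Ap_omega.
by exists s; split; rewrite // def_w.
Qed.

End Semigroup.

Theorem proposition29 (a b n : nat) :
  0 < a -> 1 < b -> 1 < n -> coprime (rb b n) a ->
  forall w : nat,
    maxAp a b n w <->
    exists2 i, 2 <= i <= n &
      w = gen a b n i + (b - 1) * \sum_(i <= j < n.+1) gen a b n j.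
Proof.
move=> a_gt0 b_gt1 n_gt1 coprime_a1 w; split.
  exact: maxAp_omegaP.
by case=> p p_range ->; apply: maxAp_omega.
Qed.
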